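(* Let $M$ be a structure in a countable vocabulary $L$ and let $\phi$ be a first order $L$-sentence in negation normal form. There is a mapping $\Phi$ such that for every strategy $\tau$ of Eloise in the evaluation game $G(M,\phi)$, $\Phi(\tau)$ is a strategy of Eloise in the model existence game $\mathrm{MEG}(\phi)$. If $\tau$ is a winning strategy, then so is $\Phi(\tau)$.
   Context: An assignment into a set $X$ is a map from a finite set of variables into $X$; $s(a/x)$ denotes the assignment agreeing with $s$ except that it sends $x$ to $a$. A formula is in negation normal form if negation occurs only in front of atomic formulas; the connectives are $\neg,\wedge,\vee,\forall,\exists$. Evaluation game $G(M,\phi)$: players Abelard and Eloise. Positions are pairs $(\psi,s)$ with $\psi$ a subformula of $\phi$ and $s$ an assignment into $M$; initial position $(\phi,\emptyset)$. At $(\psi,s)$: if $\psi$ is a literal, the game ends and Eloise wins iff $s$ satisfies $\psi$ in $M$; if $\psi=\psi_0\wedge\psi_1$, Abelard chooses the next position $(\psi_0,s)$ or $(\psi_1,s)$; if $\psi=\psi_0\vee\psi_1$, Eloise chooses it; if $\psi=\forall x\theta$, Abelard chooses $a\in M$ and the next position is $(\theta,s(a/x))$; if $\psi=\exists x\theta$, Eloise chooses $a\in M$ and the next position is $(\theta,s(a/x))$. A strategy is winning if its player wins every play following it. Model existence game $\mathrm{MEG}(\phi)$: let $C=\{c_0,c_1,\ldots\}$ be a countable set of new distinct constant symbols; a $C$-assignment is an assignment into $C$. Positions are finite sets $S$ of pairs $(\psi,s)$ with $\psi$ a subformula of $\phi$ and $s$ a $C$-assignment; the initial position is $\{(\phi,\emptyset)\}$.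 At each move, given the position $S$, Abelard selects a pair in $S$ and one of the following applies: if $(\psi_0\wedge\psi_1,s)\in S$, Abelard may decide that the next position is $S\cup\{(\psi_0,s)\}$ or $S\cup\{(\psi_1,s)\}$; if $(\psi_0\vee\psi_1,s)\in S$, Abelard may demand that Eloise choose whether the next position is $S\cup\{(\psi_0,s)\}$ or $S\cup\{(\psi_1,s)\}$; if $(\forall x\theta,s)\in S$, Abelard may choose $n\in\mathbb N$ and the next position is $S\cup\{(\theta,s(c_n/x))\}$; if $(\exists x\theta,s)\in S$, Abelard may demand that Eloise choose some $c_n$, and the next position is $S\cup\{(\theta,s(c_n/x))\}$. Abelard wins if at some point the position contains both $(\psi,s)$ and $(\neg\psi,s')$ with $\psi$ atomic and $s(x)=s'(x)$ for all variables $x$ of $\psi$. Otherwise (the game continuing for infinitely many moves) Eloise wins. *)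

From mathcomp Require Import all_boot.
From Stdlib Require Import ClassicalEpsilon.
From Stdlib Require List.

Set Implicit Arguments.
Unset Strict Implicit.
Unset Printing Implicit Defensive.

(* A vocabulary: relation symbols and function symbols with arities
   (constant symbols are 0-ary function symbols). *)
Record vocab := Vocab {
  rel_sym : Type;
  rel_ar : rel_sym -> nat;
  fun_sym : Type;
  fun_ar : fun_sym -> nat }.

Definition countable_vocab (L : vocab) : Prop :=
  (exists f : rel_sym L -> nat, injective f) /\
  (exists g : fun_sym L -> nat, injective g).

Inductive term (L : vocab) : Type :=
| Var : nat -> term L
| App : forall f : fun_sym L, ('I_(fun_ar f) -> term L) -> term L.
Arguments Var {L} _.
Arguments App {L} f _.

Inductive atomic (L : vocab) : Type :=
| ARel : forall r : rel_sym L, ('I_(rel_ar r) -> term L) -> atomic L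
| AEq : term L -> term L -> atomic L.
Arguments ARel {L} r _.
Arguments AEq {L} _ _.

Inductive formula (L : vocab) : Type :=
| Pos : atomic L -> formula L
| Neg : atomic L -> formula L
| And : formula L -> formula L -> formula L
| Or  : formula L -> formula L -> formula L
| All : nat -> formula L -> formula L
| Ex  : nat -> formula L -> formula L.
Arguments Pos {L} _.
Arguments Neg {L} _.
Arguments And {L} _ _.
Arguments Or {L} _ _.
Arguments All {L} _ _.
Arguments Ex {L} _ _.

Fixpoint tvars (L : vocab) (t : term L) (y : nat) : Prop :=
  match t with
  | Var x => x = y
  | App f a => exists i, tvars (a i) y
  end.

Definition avars (L : vocab) (a : atomic L) (y : nat) : Prop :=
  match a with
  | ARel r ts => exists i, tvars (ts i) y
  | AEq t u => tvars t y \/ tvars u y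
  end.

Fixpoint fv (L : vocab) (p : formula L) (y : nat) : Prop :=
  match p with
  | Pos a | Neg a => avars a y
  | And p q | Or p q => fv p y \/ fv q y
  | All x p | Ex x p => x <> y /\ fv p y
  end.

Definition sentence (L : vocab) (p : formula L) : Prop := forall y, ~ fv p y.

Record structure (L : vocab) := Structure {
  dom :> Type;
  dom_inh : inhabited dom;
  fun_int : forall f : fun_sym L, ('I_(fun_ar f) -> dom) -> dom;
  rel_int : forall r : rel_sym L, ('I_(rel_ar r) -> dom) -> Prop }.

(* An assignment into X: a partial map from variables to X
   (s x = None means x is not in the domain of s). *)
Definition assign (X : Type) := nat -> option X.

Definition empty_assign (X : Type) : assign X := fun _ => None.

Definition upd (X : Type) (s : assign X) (x : nat) (a : X) : assign X :=
  fun y => if y == x then Some a else s y.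

Section Eval.
Variables (L : vocab) (M : structure L).

(* an arbitrary element, used only for variables outside the domain
   of the assignment (never relevant for positions of the games). *)
Definition dflt : M := epsilon (@dom_inh L M) (fun _ => True).

Fixpoint teval (s : assign M) (t : term L) : M :=
  match t with
  | Var x => match s x with Some a => a | None => dflt end
  | App f a => @fun_int L M f (fun i => teval s (a i))
  end.

Definition asat (s : assign M) (a : atomic L) : Prop :=
  match a with
  | ARel r ts => @rel_int L M r (fun i => teval s (ts i))
  | AEq t u => teval s t = teval s u
  end.
End Eval.

Definition epos (L : vocab) (M : structure L) := (formula L * assign M)%type.

(* A strategy of Eloise: given the play so far (chronological list of
   positions, the last one being the current position), at a disjunction
   she chooses a disjunct (false = left, true = right), at an existential
   position she chooses an element of M. *)
Record EStrat (L : vocab) (M : structure L) := EStrategy {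
  e_or : seq (epos M) -> bool;
  e_ex : seq (epos M) -> M }.

Inductive EG_play (L : vocab) (M : structure L) (phi : formula L)
    (tau : EStrat M) : seq (epos M) -> Prop :=
| eg_init : EG_play phi tau [:: (phi, @empty_assign M)]
| eg_and : forall h p q s (c : bool),
    EG_play phi tau (rcons h (And p q, s)) ->
    EG_play phi tau (rcons (rcons h (And p q, s)) (if c then q else p, s))
| eg_or : forall h p q s,
    EG_play phi tau (rcons h (Or p q, s)) ->
    EG_play phi tau (rcons (rcons h (Or p q, s))
      (if e_or tau (rcons h (Or p q, s)) then q else p, s))
| eg_all : forall h x p s (a : M),
    EG_play phi tau (rcons h (All x p, s)) ->
    EG_play phi tau (rcons (rcons h (All x p, s)) (p, upd s x a))
| eg_ex : forall h x p s,
    EG_play phi tau (rcons h (Ex x p, s)) ->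
    EG_play phi tau (rcons (rcons h (Ex x p, s))
      (p, upd s x (e_ex tau (rcons h (Ex x p, s))))).

Definition EG_winning (L : vocab) (M : structure L) (phi : formula L)
    (tau : EStrat M) : Prop :=
  (forall h a s, EG_play phi tau (rcons h (Pos a, s)) -> asat s a) /\
  (forall h a s, EG_play phi tau (rcons h (Neg a, s)) -> ~ asat s a).

(* C = {c_0, c_1, ...} is represented by nat (c_n ~ n);
   a C-assignment is an assignment into nat. *)
Definition mpos (L : vocab) := (formula L * assign nat)%type.

(* A history is the list of moves made so far; each move is recorded as
   (selected pair, pair added to the position). *)
Definition mhist (L : vocab) := seq (mpos L * mpos L).

(* The current position: the set of pairs {(phi, empty)} together with all
   pairs added so far. *)
Definition mset (L : vocab) (phi : formula L) (h : mhist L) : seq (mpos L) :=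
  (phi, @empty_assign nat) :: map snd h.

(* A strategy of Eloise in MEG(phi): given the history and the pair selected
   by Abelard, she chooses a disjunct (false = left, true = right) or an
   index n of a constant c_n. *)
Record MStrat (L : vocab) := MStrategy {
  m_or : mhist L -> mpos L -> bool;
  m_ex : mhist L -> mpos L -> nat }.

Inductive MEG_hist (L : vocab) (phi : formula L) (sigma : MStrat L) :
    mhist L -> Prop :=
| meg_nil : MEG_hist phi sigma [::]
| meg_and : forall h p q s (c : bool),
    MEG_hist phi sigma h -> List.In (And p q, s) (mset phi h) ->
    MEG_hist phi sigma (rcons h ((And p q, s), (if c then q else p, s)))
| meg_or : forall h p q s,
    MEG_hist phi sigma h -> List.In (Or p q, s) (mset phi h) ->
    MEG_hist phi sigma (rcons h ((Or p q, s),
      (if m_or sigma h (Or p q, s) then q else p, s)))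
| meg_all : forall h x p s (n : nat),
    MEG_hist phi sigma h -> List.In (All x p, s) (mset phi h) ->
    MEG_hist phi sigma (rcons h ((All x p, s), (p, upd s x n)))
| meg_ex : forall h x p s,
    MEG_hist phi sigma h -> List.In (Ex x p, s) (mset phi h) ->
    MEG_hist phi sigma (rcons h ((Ex x p, s),
      (p, upd s x (m_ex sigma h (Ex x p, s))))).

Definition contradictory (L : vocab) (S : seq (mpos L)) : Prop :=
  exists (a : atomic L) (s s' : assign nat),
    List.In (Pos a, s) S /\ List.In (Neg a, s') S /\
    (forall x, avars a x -> s x = s' x).

Definition MEG_winning (L : vocab) (phi : formula L) (sigma : MStrat L) : Prop :=
  forall h, MEG_hist phi sigma h -> ~ contradictory (mset phi h).

From mathcomp Require Import all_boot.
From Stdlib Require Import ClassicalEpsilon FunctionalExtensionality.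
From Stdlib Require List.

Set Implicit Arguments.
Unset Strict Implicit.
Unset Printing Implicit Defensive.

(* Eloise plays MEG(phi) by shadowing tau. She keeps an interpretation of the
   constants c_0, ..., c_{k-1} in M and maintains the invariant that every pair
   (psi, s) of the current position, read through this interpretation, is a
   position reached by some play of G(M, phi) following tau. At a disjunction
   she answers as tau does at such a play; at an existential she names the
   fresh constant c_k and interprets it by the witness tau gives there. If tau
   is winning, pairs (P, s) and (~P, s') with s, s' agreeing on the variables
   of P are read as a true and a false instance of P in M under assignments
   agreeing on P, which is impossible. *)

Definition map_assign (A B : Type) (f : A -> B) (s : assign A) : assign B :=
  fun y => omap f (s y).

Lemma map_assign_upd (A B : Type) (f : A -> B) s x a :
  map_assign f (upd s x a) = upd (map_assign f s) x (f a).
Proof. by apply: functional_extensionality => y; rewrite /map_assign /upd; case: eqP. Qed.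

Lemma map_assign_eq_on (A B : Type) (f g : A -> B) s :
  (forall y a, s y = Some a -> f a = g a) -> map_assign f s = map_assign g s.
Proof.
move=> fg; apply: functional_extensionality => y; rewrite /map_assign.
by case E: (s y) => [a|//] /=; rewrite (fg _ _ E).
Qed.

Fixpoint teval_eq_on (L : vocab) (M : structure L) (s1 s2 : assign M) (t : term L)
    {struct t} : (forall y, tvars t y -> s1 y = s2 y) -> teval s1 t = teval s2 t.
Proof.
case: t => [x|f ts] /= s12; first by rewrite s12.
congr (fun_int _); apply: functional_extensionality => i.
by apply: teval_eq_on => y ty; apply: s12; exists i.
Qed.

Lemma asat_eq_on (L : vocab) (M : structure L) (s1 s2 : assign M) (a : atomic L) :
  (forall y, avars a y -> s1 y = s2 y) -> asat s1 a = asat s2 a.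
Proof.
case: a => [r ts|t u] /= s12.
  congr (rel_int _); apply: functional_extensionality => i.
  by apply: teval_eq_on => y ty; apply: s12; exists i.
by rewrite !(@teval_eq_on _ _ s1 s2) // => y ty; apply: s12; [right|left].
Qed.

Lemma In_mset_rcons (L : vocab) (phi : formula L) (H : mhist L) m q :
  List.In q (mset phi (rcons H m)) -> List.In q (mset phi H) \/ q = m.2.
Proof.
rewrite /mset map_rcons -(cats1 (map snd H)) => -[<-|]; first by left; left.
move=> /(@List.in_app_or _ (map snd H) [:: m.2] q) [|[<-|[]]]; by [left; right | right].
Qed.

Section EvaluationGame.
Variables (L : vocab) (M : structure L) (phi : formula L) (tau : EStrat M).

Definition reachable (q : epos M) : Prop :=
  exists h, EG_play phi tau (rcons h q).

Definition play_to (q : epos M) : seq (epos M) :=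
  epsilon (inhabits [::]) (fun h => EG_play phi tau (rcons h q)).

Lemma play_toP q : reachable q -> EG_play phi tau (rcons (play_to q) q).
Proof. exact: epsilon_spec. Qed.

Definition tau_disjunct (q : epos M) : bool := e_or tau (rcons (play_to q) q).

Definition tau_witness (q : epos M) : M := e_ex tau (rcons (play_to q) q).

Lemma reachable_and p q s (c : bool) :
  reachable (And p q, s) -> reachable (if c then q else p, s).
Proof. by move=> [h P]; exists (rcons h (And p q, s)); apply: eg_and. Qed.

Lemma reachable_or p q s :
  reachable (Or p q, s) ->
  reachable (if tau_disjunct (Or p q, s) then q else p, s).
Proof.
by move=> /play_toP P; exists (rcons (play_to (Or p q, s)) (Or p q, s)); apply: eg_or.
Qed.

Lemma reachable_all x p s a : reachable (All x p, s) -> reachable (p, upd s x a).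
Proof. by move=> [h P]; exists (rcons h (All x p, s)); apply: eg_all. Qed.

Lemma reachable_ex x p s :
  reachable (Ex x p, s) -> reachable (p, upd s x (tau_witness (Ex x p, s))).
Proof.
by move=> /play_toP P; exists (rcons (play_to (Ex x p, s)) (Ex x p, s)); apply: eg_ex.
Qed.

Lemma EG_winning_consistent a s1 s2 : EG_winning phi tau ->
  reachable (Pos a, s1) -> reachable (Neg a, s2) ->
  ~ (forall y, avars a y -> s1 y = s2 y).
Proof.
move=> [winPos winNeg] [h1 P1] [h2 P2] s12; apply: (winNeg _ _ _ P2).
by rewrite -(asat_eq_on s12); apply: (winPos _ _ _ P1).
Qed.

End EvaluationGame.

Section ShadowStrategy.
Variables (L : vocab) (M : structure L) (phi : formula L) (tau : EStrat M).

Definition uses_below (n : nat) (s : assign nat) : Prop :=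
  forall y k, s y = Some k -> k < n.

Lemma uses_below_le m n s : m <= n -> uses_below m s -> uses_below n s.
Proof. by move=> mn sm y k /sm /leq_trans; apply. Qed.

Lemma uses_below_upd n s x k : uses_below n s -> k < n -> uses_below n (upd s x k).
Proof. by move=> sn kn y j; rewrite /upd; case: eqP => [_ [<-]|_ /sn]. Qed.

(* Eloise's memory: the index of the next fresh constant and the
   interpretation of the constants. Abelard may name any c_k at a universal
   move, so the fresh index must move past k. *)
Definition next_memory (st : nat * (nat -> M)) (mv : mpos L * mpos L) :=
  let: (n, h) := st in
  match mv with
  | ((All x _, _), (_, s')) => (if s' x is Some k then maxn n k.+1 else n, h)
  | ((Ex x p, s), _) =>
      (n.+1, fun k => if k == n then tau_witness phi tau (Ex x p, map_assign h s)
                      else h k)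
  | _ => (n, h)
  end.

Definition memory (H : mhist L) : nat * (nat -> M) :=
  foldl next_memory (0, fun _ => dflt M) H.

Definition fresh (H : mhist L) : nat := (memory H).1.

Definition interp (H : mhist L) : nat -> M := (memory H).2.

Definition shadow_strategy : MStrat L :=
  MStrategy (fun H q => tau_disjunct phi tau (q.1, map_assign (interp H) q.2))
            (fun H _ => fresh H).

Lemma fresh_rcons_ge H mv : fresh H <= fresh (rcons H mv).
Proof.
rewrite /fresh /memory foldl_rcons; case: (foldl _ _ _) => n h.
case: mv => [[psi s] [psi' s']]; case: psi => //= x p.
by case: (s' x) => // k; apply: leq_maxl.
Qed.

Lemma interp_rcons_lt H mv k : k < fresh H -> interp (rcons H mv) k = interp H k.
Proof.
rewrite /fresh /interp /memory foldl_rcons; case: (foldl _ _ _) => n h /= kn.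
case: mv => [[psi s] [psi' s']]; case: psi => //= x p.
by case: eqP => // kE; rewrite kE ltnn in kn.
Qed.

Lemma map_assign_interp_rcons H mv s : uses_below (fresh H) s ->
  map_assign (interp (rcons H mv)) s = map_assign (interp H) s.
Proof. by move=> sH; apply: map_assign_eq_on => y k /sH; apply: interp_rcons_lt. Qed.

Definition invariant (H : mhist L) : Prop :=
  forall psi s, List.In (psi, s) (mset phi H) ->
    uses_below (fresh H) s /\ reachable phi tau (psi, map_assign (interp H) s).

Lemma invariant_rcons H mv : invariant H ->
  uses_below (fresh (rcons H mv)) mv.2.2 ->
  reachable phi tau (mv.2.1, map_assign (interp (rcons H mv)) mv.2.2) ->
  invariant (rcons H mv).
Proof.
move=> invH new_below new_reach psi s /In_mset_rcons [/invH [sH reach]|newE].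
  split; first exact: uses_below_le (fresh_rcons_ge H mv) sH.
  by rewrite map_assign_interp_rcons.
by case: mv newE new_below new_reach => sel [psi' s'] /= [-> ->].
Qed.

Lemma shadow_invariant H : MEG_hist phi shadow_strategy H -> invariant H.
Proof.
elim=> {H} [|H p q s c _ invH /invH [sH reach]|H p q s _ invH /invH [sH reach]
            |H x p s k _ invH /invH [sH reach]|H x p s _ invH /invH [sH reach]].
- move=> psi s /= [[<- <-]|[]]; split=> [y k //|]; exists [::]; exact: eg_init.
- apply: invariant_rcons => //=; first exact: uses_below_le (fresh_rcons_ge _ _) sH.
  by rewrite map_assign_interp_rcons //; apply: reachable_and.
- apply: invariant_rcons => //=; first exact: uses_below_le (fresh_rcons_ge _ _) sH.
  by rewrite map_assign_interp_rcons //; apply: reachable_or.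
- have freshE : fresh (rcons H ((All x p, s), (p, upd s x k))) = maxn (fresh H) k.+1.
    by rewrite /fresh /memory foldl_rcons; case: (foldl _ _ _) => n h /=; rewrite /upd eqxx.
  apply: invariant_rcons => //=.
    rewrite freshE; apply: uses_below_upd; last exact: leq_maxr.
    exact: uses_below_le (leq_maxl _ _) sH.
  by rewrite map_assign_upd map_assign_interp_rcons //; apply: reachable_all.
- set mv := (Ex x p, s, _).
  have [freshE witnessE] : fresh (rcons H mv) = (fresh H).+1 /\
      interp (rcons H mv) (fresh H) = tau_witness phi tau (Ex x p, map_assign (interp H) s).
    by rewrite /fresh /interp /memory foldl_rcons; case: (foldl _ _ _) => n h /=; rewrite eqxx.
  apply: invariant_rcons => //=.
    by rewrite freshE; apply: uses_below_upd; [apply: uses_below_le sH|].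
  by rewrite map_assign_upd map_assign_interp_rcons // witnessE; apply: reachable_ex.
Qed.

Lemma shadow_strategy_winning : EG_winning phi tau -> MEG_winning phi shadow_strategy.
Proof.
move=> win H /shadow_invariant invH [a [s1 [s2 [in1 [in2 s12]]]]].
have [_ reach1] := invH _ _ in1; have [_ reach2] := invH _ _ in2.
apply: (EG_winning_consistent win reach1 reach2) => y /s12.
by rewrite /map_assign => ->.
Qed.

End ShadowStrategy.

Theorem theorem2 (L : vocab) (HL : countable_vocab L) (M : structure L)
    (phi : formula L) (Hphi : sentence phi) :
  exists Phi : EStrat M -> MStrat L,
    forall tau : EStrat M, EG_winning phi tau -> MEG_winning phi (Phi tau).
Proof.
exists (shadow_strategy phi); exact: shadow_strategy_winning.
Qed.
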